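(* Let $q\ge 3$ be a prime power and $n=q^4-1$. For every integer $a$ with $2\le a\le q^2-1$ there exists a QUENTA code with parameters $[[n,\,n-4(a-1)-3,\,d\ge a+1;\,1]]_q$.
   Context: A QUENTA code (entanglement-assisted quantum error-correcting code) with parameters $[[n,k,d;c]]_q$ is a $q$-ary entanglement-assisted quantum stabilizer code that encodes $k$ logical qudits into $n$ physical qudits using $c$ pairs of maximally entangled qudits pre-shared between sender and receiver, and has minimum distance $d$. *)

From HB Require Import structures.
From mathcomp Require Import all_boot all_order all_algebra all_field.
Set Implicit Arguments. Unset Strict Implicit. Unset Printing Implicit Defensive.
Import GRing.Theory.
Local Open Scope ring_scope.

(* A Pauli operator on n qudits (modulo phases) is a vector (a|b) in F_q^(2n),
   represented as a row vector of length n + n. *)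
Notation pvec F n := 'rV[F]_(n + n).

Definition symp (F : finFieldType) (n : nat) (u v : pvec F n) : F :=
  (lsubmx u *m (rsubmx v)^T - rsubmx u *m (lsubmx v)^T) 0 0.

Definition swt (F : finFieldType) (n : nat) (u : pvec F n) : nat :=
  #|[set i : 'I_n | (lsubmx u 0 i != 0) || (rsubmx u 0 i != 0)]|.

Definition is_subspace (F : finFieldType) (n : nat) (S : {set pvec F n}) : Prop :=
  [/\ (0 : pvec F n) \in S,
      forall u v, u \in S -> v \in S -> u + v \in S
    & forall (x : F) u, u \in S -> x *: u \in S].

(* symplectic dual S^{perp_s}  (= centralizer Z(S) of the stabilizer) *)
Definition sdual (F : finFieldType) (n : nat) (S : {set pvec F n}) : {set pvec F n} :=
  [set v | [forall u in S, symp u v == 0]].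

(* A QUENTA code [[n,k,d;c]]_q with minimum distance at least d, given by its
   (generally non-abelian) stabilizer S, with q = #|F|:
   - dim S = n + c - k  (the extended stabilizer on n + c qudits is isotropic
     of the same dimension, encoding (n + c) - dim S logical qudits);
   - 2c = dim S - dim (S :&: S^perp) (c symplectic pairs = c ebits);
   - every element of Z(S) \ S_I = S^perp \ S has symplectic weight >= d. *)
Definition quenta_code (F : finFieldType) (n k d c : nat) : Prop :=
  exists S : {set pvec F n},
    [/\ is_subspace S,
        (#|S| * #|F| ^ k = #|F| ^ (n + c))%N,
        (#|S| = #|S :&: sdual S| * #|F| ^ (2 * c))%N
      & forall v, v \in sdual S :\: S -> (d <= swt v)%N].

From HB Require Import structures.
From mathcomp Require Import all_boot all_order all_algebra all_field.
From mathcomp Require Import zify ring.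
Set Implicit Arguments. Unset Strict Implicit. Unset Printing Implicit Defensive.
Import GRing.Theory.

(* Write L = F_(q^4) and identify a vector (a|b) of F_q^(2n) with (a_i + th b_i)_i,
   th in F_(q^2) \ F_q; the symplectic form becomes the skew-Hermitian form
   sum_i (u_i v_i^q - u_i^q v_i), up to the factor th^q - th.  The stabilizer is
   the evaluation, at all nonzero al of L, of the F_(q^2)-valued polynomials
     b + d x^(q^2+1) + sum_(0<j<a) (c_j x^j + (c_j x^j)^(q^2)),   b, d in F_(q^2), c_j in L.
   As sum_(al != 0) al^e is -1 if q^4 - 1 divides e and 0 otherwise, and no
   exponent A + B q formed from two monomials is divisible by q^4 - 1 unless both
   are constant, the evaluation vectors pair to zero except through their constant
   terms b: these form a single hyperbolic pair (one ebit), and the hull is {b = 0}.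
   The same power sums recover all coefficients, so the stabilizer has dimension 4a.
   Finally a dual vector v is orthogonal to b = 1, b = th and to all c x^j; since a
   nonzero additive polynomial of degree q^3 < q^4 has a nonroot, this forces
   sum_i al_i^m v_i^q = 0 for m < a, and a Vandermonde argument kills v whenever
   its weight is at most a. *)

(** * Exponent arithmetic *)

Lemma ndvdn_of_mul_mod M x c s t : 0 < s < M ->
  x * c + t = s + t * M.+1 -> ~~ (M %| x).
Proof.
move=> /andP[s_gt0 s_ltM] e; apply/negP => dvd_x.
have exc : x * c = s + t * M by move: e; rewrite mulnS; lia.
have : M %| s + t * M by rewrite -exc dvdn_mulr.
by rewrite dvdn_addl ?dvdn_mull // => /(dvdn_leq s_gt0); rewrite leqNgt s_ltM.
Qed.

(* Exponents of the nonconstant monomials of the encoding polynomials. *)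
Definition code_exponent q a e :=
  e = q ^ 2 + 1 \/ exists2 j, 0 < j < a & e = j \/ e = j * q ^ 2.

Lemma code_exponent_gt0 q a e : 0 < q -> code_exponent q a e -> 0 < e.
Proof. by move=> q_gt0 [->|[j hj [->|->]]]; rewrite ?muln_gt0 ?expn_gt0 ?q_gt0; lia. Qed.

Lemma code_exponent_lt q a e : 3 <= q -> a <= q ^ 2 - 1 ->
  code_exponent q a e -> e < q ^ 4 - 1.
Proof.
rewrite /code_exponent => q3; have -> : q ^ 4 = q ^ 2 * q ^ 2 by rewrite -expnD.
have : 9 <= q ^ 2 by rewrite expnS expn1; nia.
by move: (q ^ 2) => Q Q9 ha [->|[j hj [->|->]]]; nia.
Qed.

Lemma code_exponent_pair_ndvd q a A B : 3 <= q -> a <= q ^ 2 - 1 ->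
  (A = 0 \/ code_exponent q a A) -> (B = 0 \/ code_exponent q a B) ->
  ~ (A = 0 /\ B = 0) -> ~~ (q ^ 4 - 1 %| A + B * q).
Proof.
move=> q3 ha hA hB nAB.
have q4 : q ^ 4 = q ^ 2 * q ^ 2 by rewrite -expnD.
have q3e : q ^ 3 = q ^ 2 * q by rewrite -expnSr.
have [Q eQ] : {Q | q ^ 2 = Q} by exists (q ^ 2).
rewrite /code_exponent in hA hB; rewrite eQ in ha q4 q3e hA hB.
have hQ : 3 * q <= Q by rewrite -eQ expnS expn1 leq_mul2r q3 orbT.
have Q9 : 9 <= Q by lia.
have QQ : 3 * q * Q <= Q * Q by rewrite leq_mul2r hQ orbT.
have key k s t x : 0 < s < q ^ 4 - 1 -> x * q ^ k + t = s + t * (Q * Q) ->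
    ~~ (q ^ 4 - 1 %| x).
  move=> hs e; apply: (ndvdn_of_mul_mod (c := q ^ k) (t := t) hs).
  by rewrite subn1 prednK q4 // muln_gt0; lia.
rewrite q4 in key *.
(* In each case some q^k maps A + B q, modulo q^4 - 1, to a residue in (0, q^4 - 1). *)
move: hA hB nAB => [->|[->|[j hj [->|->]]]] [->|[->|[i hi [->|->]]]] nAB;
  try by case: nAB.
- apply: (@key 0 ((Q + 1) * q) 0); rewrite ?expn0; nia.
- apply: (@key 0 (i * q) 0); rewrite ?expn0; nia.
- apply: (@key 1 i i); rewrite ?expn1; nia.
- apply: (@key 0 (Q + 1) 0); rewrite ?expn0; nia.
- apply: (@key 0 (Q + 1 + (Q + 1) * q) 0); rewrite ?expn0; nia.
- apply: (@key 0 (Q + 1 + i * q) 0); rewrite ?expn0; nia.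
- apply: (@key 1 (Q * q + q + i) i); rewrite ?expn1; nia.
- apply: (@key 0 j 0); rewrite ?expn0; nia.
- apply: (@key 0 (j + (Q + 1) * q) 0); rewrite ?expn0; nia.
- apply: (@key 0 (j + i * q) 0); rewrite ?expn0; nia.
- apply: (@key 1 (j * q + i) i); rewrite ?expn1; nia.
- apply: (@key 0 (j * Q) 0); rewrite ?expn0; nia.
- apply: (@key 2 (j + q + Q * q) (j + q)); rewrite ?eQ; nia.
- apply: (@key 3 (j * q + i) (j * q + i)); nia.
- apply: (@key 2 (j + i * q) (j + i * q)); rewrite ?eQ; nia.
Qed.

Lemma dvdn_add_subn M A m : A < M -> m < M -> (M %| A + (M - m)) = (A == m).
Proof.
move=> hA hm; case: (ltngtP A m) => h.
- apply/negbTE/negP => /(dvdn_leq _); lia.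
- have -> : A + (M - m) = (A - m) + M by lia.
  by rewrite dvdn_addl //; apply/negbTE/negP => /(dvdn_leq _); lia.
- by rewrite h subnKC ?dvdnn ?eqxx // ltnW.
Qed.

Lemma quenta_exponent_eq q a : 3 <= q -> 2 <= a <= q ^ 2 - 1 ->
  4 * a + (q ^ 4 - 1 - 4 * (a - 1) - 3) = q ^ 4 - 1 + 1.
Proof.
move=> q3 /andP[a2 aq]; have -> : q ^ 4 = q ^ 2 * q ^ 2 by rewrite -expnD.
have : 9 <= q ^ 2 by rewrite expnS expn1; nia.
by move: aq; move: (q ^ 2) => Q aQ Q9; nia.
Qed.

Local Open Scope ring_scope.

(** * Finite fields *)

Section FiniteField.
Variable K : finFieldType.

Lemma natr_card_finField : (#|K|%:R : K) = 0.
Proof.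
have [p _ pcharKp] := finPcharP K.
have := finNzRing_gt1 K; rewrite (card_pprimeChar pcharKp) natrX (pcharf0 pcharKp).
by case: (logn p _) => [|k]; rewrite ?expr0n.
Qed.

Lemma finField_nonroot (P : {poly K}) : P != 0 -> (size P <= #|K|)%N ->
  exists x, ~~ root P x.
Proof.
move=> P_nz P_small; apply/existsP; rewrite -negb_forall; apply/negP => /forallP roots.
have := max_poly_roots P_nz (introT allP (fun x _ => roots x)) (enum_uniq K).
by rewrite -cardE ltnNge P_small.
Qed.

Lemma expf_card_pred (x : K) : x != 0 -> x ^+ #|K|.-1 = 1.
Proof.
move=> x_nz; apply: (mulIf x_nz); rewrite mul1r -exprSr prednK ?expf_card //.
exact: ltnW (finNzRing_gt1 K).
Qed.

Lemma expf_modn (x : K) e : x != 0 -> x ^+ e = x ^+ (e %% #|K|.-1).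
Proof.
move=> x_nz; rewrite {1}(divn_eq e #|K|.-1) exprD mulnC exprM.
by rewrite expf_card_pred // expr1n mul1r.
Qed.

Lemma sum_nonzero_expr e :
  \sum_(x : K | x != 0) x ^+ e = if (#|K|.-1 %| e)%N then -1 else 0.
Proof.
have K_gt1 := finNzRing_gt1 K.
case: ifP => [/eqP dvd_e | ndvd_e].
  rewrite (eq_bigr (fun _ => 1)) => [|x x_nz]; last by rewrite expf_modn ?dvd_e.
  rewrite sumr_const (eq_card (B := predC1 0)) // cardC1 -subn1 natrB.
    by rewrite natr_card_finField sub0r.
  exact: ltnW.
set r := (e %% #|K|.-1)%N.
have r_gt0 : (0 < r)%N by rewrite lt0n /r; move: ndvd_e; rewrite /dvdn => ->.
have r_lt : (r < #|K|.-1)%N by rewrite ltn_mod -ltnS prednK // ltnW.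
pose P : {poly K} := 'X * ('X^r - 1).
have size_P : size P = r.+2.
  by rewrite /P mulrC size_mulX ?size_XnsubC // -size_poly_eq0 size_XnsubC.
have [g] : exists g, ~~ root P g.
  by apply: finField_nonroot; rewrite -?size_poly_eq0 size_P //; lia.
rewrite /root /P !hornerE mulf_eq0 negb_or subr_eq0 => /andP[g_nz ge_n1].
rewrite -(expf_modn _ g_nz) in ge_n1.
set s := (X in X = 0).
have s_fix : s = g ^+ e * s.
  rewrite {1}/s (reindex_inj (mulfI g_nz)) /= mulr_sumr.
  apply: congr_big => // [x | x _]; first by rewrite mulf_eq0 negb_or g_nz.
  by rewrite exprMn.
apply/eqP; move: s_fix => /eqP; rewrite -subr_eq0 -{1}[s]mul1r -mulrBl mulf_eq0.
by rewrite subr_eq0 eq_sym (negbTE ge_n1).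
Qed.

End FiniteField.

Lemma finField_ext (F : finFieldType) d : (0 < d)%N ->
  {L : finFieldType & {f : {rmorphism F -> L} | #|L| = (#|F| ^ d)%N}}.
Proof.
move=> d_gt0; set m := (#|F| ^ d)%N.
have m_gt1 : (1 < m)%N by rewrite -(expn0 #|F|) ltn_exp2l ?finNzRing_gt1.
pose P (R : nzRingType) : {poly R} := 'X^m - 'X.
have size_P (R : nzRingType) : size (P R) = m.+1.
  by rewrite size_polyDl size_polyXn // size_polyN size_polyX ltnS.
have /FinSplittingFieldFor[L L_split] : P F != 0.
  by rewrite -size_poly_eq0 size_P.
exists (FinFieldExtType L), (in_alg L).
have [zs P_split L_gen] := L_split.
rewrite /= rmorphB /= map_polyXn map_polyX -/(P L) in P_split.
have rootP (x : L) : root (P L) x = (x ^+ m == x).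
  by rewrite /root !hornerE subr_eq0.
have [sigma _ sigmaE] := finField_galois_generator (sub1v {:L}).
rewrite dimv1 expn1 in sigmaE.
have sigmaXE k (x : L) : (sigma ^+ k)%g x = x ^+ (#|F| ^ k).
  elim: k => [|k IH]; first by rewrite gal_id expn0 expr1.
  by rewrite expgSr galM ?memvf // IH sigmaE ?memvf // -exprM expnSr.
(* L is generated by roots of X^m - X, all fixed by sigma^d. *)
have fixS : fixedSpace (sigma ^+ d)%g = {:L}%VS.
  apply/eqP; rewrite eqEsubv subvf -L_gen -[fixedSpace _]subfield_closed agenvS //.
  rewrite subv_add sub1v; apply/span_subvP => z zs_z.
  apply/fixedSpaceP; rewrite sigmaXE; apply/eqP; rewrite -rootP.
  by rewrite (eqp_root P_split) root_prod_XsubC.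
have zsP (x : L) : x \in zs.
  rewrite -root_prod_XsubC -(eqp_root P_split) rootP -sigmaXE.
  by have := memvf x; rewrite -fixS => /fixedSpaceP ->.
have m0 : (m%:R : L) = 0.
  by rewrite natrX -(rmorph_nat (in_alg L)) natr_card_finField rmorph0 expr0n gtn_eqF.
have uniq_zs : uniq zs.
  rewrite -separable_prod_XsubC -(eqp_separable P_split) unlock.
  rewrite derivB derivXn derivX -scaler_nat m0 scale0r sub0r -scaleN1r.
  by rewrite coprimepZr ?oppr_eq0 ?oner_eq0 ?coprimep1.
have /eq_card -> : FinFieldExtType L =i zs by move=> x; rewrite zsP.
rewrite (card_uniqP _) //; apply: succn_inj.
by rewrite -(size_prod_XsubC _ id) -(eqp_size P_split) size_P.
Qed.


Lemma sparse_power_sums_eq0 (K : fieldType) n (al t : 'I_n -> K) (k : nat) :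
  injective al -> (#|[set i | t i != 0%R]| <= k)%N ->
  (forall m, (m < k)%N -> \sum_i al i ^+ m * t i = 0) -> forall i, t i = 0.
Proof.
move=> al_inj supp_le sums0 b; apply/eqP/negP => /negP tb_nz.
set T := [set i | t i != 0].
pose h := \prod_(g <- enum (T :\ b)) ('X - (al g)%:P).
have size_h : (size h <= k)%N.
  rewrite size_prod_XsubC -cardE; move: supp_le.
  by rewrite (cardsD1 b T) inE tb_nz.
have : \sum_i t i * h.[al i] = 0.
  rewrite (eq_bigr (fun i => \sum_(m < size h) h`_m * (al i ^+ m * t i))) => [|i _].
    by rewrite exchange_big big1 // => m _; rewrite -mulr_sumr sums0 ?mulr0 // (leq_trans _ size_h).
  by rewrite horner_coef mulrC mulr_suml; apply: eq_bigr => m _; rewrite mulrA.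
rewrite (bigD1 b) //= big1 ?addr0 => [|i i_neq_b].
  apply/eqP; rewrite mulf_eq0 negb_or tb_nz horner_prod prodf_seq_neq0 /=.
  apply/allP => g; rewrite mem_enum !inE hornerXsubC subr_eq0 => /andP[g_neq_b _].
  by apply: contra g_neq_b => /eqP/al_inj->.
have [ti0 | ti_nz] := eqVneq (t i) 0; first by rewrite ti0 mul0r.
apply/eqP; rewrite mulf_eq0 horner_prod prodf_seq_eq0; apply/orP; right.
apply/hasP; exists i; last by rewrite /= hornerXsubC subrr.
by rewrite mem_enum !inE i_neq_b.
Qed.

(** * Frobenius coordinates *)

Section Frobenius.
Variables (F L : finFieldType) (f : {rmorphism F -> L}).

(* The embedding is a dummy argument: it carries the characteristic of L needed
   for the rmorphism instance below, and makes that instance inferable. *)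
Definition frob of {rmorphism F -> L} := fun x : L => x ^+ #|F|.

Lemma frob_is_zmod_morphism : zmod_morphism (frob f).
Proof.
have [p _ pcharFp] := finPcharP F.
have pcharLp := rmorph_pchar f pcharFp.
have q_pnat : [pchar L].-nat #|F|.
  rewrite (eq_pnat _ (pcharf_eq pcharLp)) (card_pprimeChar pcharFp) pnatX.
  by rewrite pnat_id ?(pcharf_prime pcharFp).
by move=> x y; rewrite /frob exprDn_pchar // exprNn_pchar.
Qed.

Lemma frob_is_monoid_morphism : monoid_morphism (frob f).
Proof. by split=> [|x y]; rewrite /frob ?expr1n ?exprMn. Qed.

HB.instance Definition _ := GRing.isZmodMorphism.Build L L (frob f) frob_is_zmod_morphism.
HB.instance Definition _ := GRing.isMonoidMorphism.Build L L (frob f) frob_is_monoid_morphism.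

Lemma frob_rmorph c : frob f (f c) = f c.
Proof. by rewrite /frob -rmorphXn expf_card. Qed.

Lemma frob_fixed x : frob f x = x -> exists c, x = f c.
Proof.
move=> x_fixed; have : root (map_poly f ('X^#|F| - 'X)) x.
  by rewrite rmorphB /= map_polyXn map_polyX rootE !hornerE -/(frob f x) x_fixed subrr.
rewrite finField_genPoly rmorph_prod (eq_bigr (fun c => 'X - (f c)%:P)).
  rewrite -big_enum /= -(big_map f xpredT (fun z => 'X - z%:P)).
  by rewrite root_prod_XsubC => /mapP[c _ ->]; exists c.
by move=> c _; rewrite rmorphB /= map_polyX map_polyC.
Qed.
End Frobenius.

Section FrobeniusCoordinates.
Variables (F L : finFieldType) (f : {rmorphism F -> L}) (th : L).
Hypotheses (th_fix2 : frob f (frob f th) = th) (th_nfix : frob f th != th).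
Local Notation fr := (frob f).

Definition embed2 (b : F * F) : L := f b.1 + th * f b.2.

Lemma embed20 : embed2 0 = 0.
Proof. by rewrite /embed2 !rmorph0 mulr0 addr0. Qed.

Lemma embed2D b b' : embed2 (b + b') = embed2 b + embed2 b'.
Proof. by rewrite /embed2 /= !rmorphD /=; ring. Qed.

Lemma embed2Z c b : embed2 (c * b.1, c * b.2) = f c * embed2 b.
Proof. by rewrite /embed2 /= !rmorphM /=; ring. Qed.

Lemma embed2_eq0 b : embed2 b = 0 -> b = (0, 0).
Proof.
case: b => x y; rewrite /embed2 /= => e.
have y0 : y = 0.
  apply/eqP/negP => /negP y_nz; move/eqP: th_nfix; apply.
  have fy_nz : f y != 0 by rewrite fmorph_eq0.
  have -> : th = f (- x / y).
    rewrite fmorph_div rmorphN /=; apply: (mulIf fy_nz); rewrite divfK //.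
    by apply/eqP; rewrite -addr_eq0 addrC e.
  by rewrite frob_rmorph.
move: e; rewrite y0 rmorph0 mulr0 addr0 => /eqP; rewrite fmorph_eq0 => /eqP->.
by [].
Qed.

Lemma embed2_inj : injective embed2.
Proof.
case=> [x y] [x' y'] e.
have /embed2_eq0[/eqP + /eqP] : embed2 (x - x', y - y') = 0.
  by rewrite /embed2 /= !rmorphB mulrBr addrACA -opprD -/(embed2 (x, y)) e subrr.
by rewrite !subr_eq0 => /eqP-> /eqP->.
Qed.

Lemma frob2_embed2 b : fr (fr (embed2 b)) = embed2 b.
Proof. by rewrite /embed2 !rmorphD !rmorphM /= !frob_rmorph th_fix2. Qed.

Lemma embed2_surj y : fr (fr y) = y -> exists b, embed2 b = y.
Proof.
move=> y_fix2; have dth_nz : fr th - th != 0 by rewrite subr_eq0.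
pose c2 := (fr y - y) / (fr th - th); pose c1 := y - th * c2.
have c2_fix : fr c2 = c2.
  rewrite /c2 fmorph_div /= !rmorphB /= y_fix2 th_fix2 -opprB -[th - _]opprB.
  by rewrite invrN mulrN mulNr opprK.
have c1_fix : fr c1 = c1.
  have fry : fr y = (fr th - th) * c2 + y by rewrite /c2 mulrC divfK ?subrK.
  by rewrite /c1 rmorphB rmorphM /= c2_fix fry; ring.
have [[x1 e1] [x2 e2]] := (frob_fixed c1_fix, frob_fixed c2_fix).
by exists (x1, x2); rewrite /embed2 /= -e1 -e2 subrK.
Qed.

Definition unembed2 (y : L) : F * F := odflt (0, 0) [pick b | embed2 b == y].

Lemma unembed2K y : fr (fr y) = y -> embed2 (unembed2 y) = y.
Proof.
move=> /embed2_surj[b <-]; rewrite /unembed2.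
by case: pickP => [b' /eqP // | /(_ b)]; rewrite eqxx.
Qed.

Variable n : nat.
Implicit Types u v : pvec F n.

Definition ecoord v (i : 'I_n) : L := embed2 (lsubmx v 0 i, rsubmx v 0 i).

Definition of_ecoord (U : 'I_n -> L) : pvec F n :=
  row_mx (\row_i (unembed2 (U i)).1) (\row_i (unembed2 (U i)).2).

Lemma ecoordD u v i : ecoord (u + v) i = ecoord u i + ecoord v i.
Proof. by rewrite /ecoord /embed2 /= !linearD !mxE !rmorphD /=; ring. Qed.

Lemma ecoordZ c v i : ecoord (c *: v) i = f c * ecoord v i.
Proof. by rewrite /ecoord /embed2 /= !linearZ !mxE !rmorphM /=; ring. Qed.

Lemma ecoord0 i : ecoord 0 i = 0.
Proof. by have := ecoordZ 0 0 i; rewrite scale0r rmorph0 mul0r. Qed.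

Lemma frob2_ecoord v i : fr (fr (ecoord v i)) = ecoord v i.
Proof. exact: frob2_embed2. Qed.

Lemma ecoord_of (U : 'I_n -> L) i : fr (fr (U i)) = U i -> ecoord (of_ecoord U) i = U i.
Proof.
move=> U_fix2; rewrite /ecoord row_mxKl row_mxKr !mxE.
by rewrite -surjective_pairing unembed2K.
Qed.

Lemma ecoord_eq0 v i : (ecoord v i == 0) = (lsubmx v 0 i == 0) && (rsubmx v 0 i == 0).
Proof.
apply/eqP/andP => [/embed2_eq0[l0 r0] | [/eqP l0 /eqP r0]].
  by rewrite l0 r0.
by rewrite /ecoord l0 r0 /embed2 /= rmorph0 mulr0 addr0.
Qed.

Lemma ecoord_inj u v : ecoord u =1 ecoord v -> u = v.
Proof.
move=> e; have e2 i := embed2_inj (e i).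
by rewrite -[u]hsubmxK -[v]hsubmxK; congr row_mx; apply/rowP => i; case: (e2 i).
Qed.

Lemma swt_ecoord v : swt v = #|[set i | ecoord v i != 0]|.
Proof. by apply: eq_card => i; rewrite !inE ecoord_eq0 negb_and. Qed.

Lemma symp_ecoord u v : f (symp u v) * (fr th - th) =
  \sum_i (ecoord u i * fr (ecoord v i) - fr (ecoord u i) * ecoord v i).
Proof.
rewrite /symp !mxE rmorphB !rmorph_sum /= mulrBl !mulr_suml -sumrB.
apply: eq_bigr => i _; rewrite /ecoord /embed2 /= !mxE !rmorphD !rmorphM /=.
by rewrite !frob_rmorph; ring.
Qed.

End FrobeniusCoordinates.

(** * The code *)

Section QuarticExtension.
Variables (F L : finFieldType) (f : {rmorphism F -> L}).
Local Notation q := #|F|.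
Local Notation fr := (frob f).
Local Notation M := (q ^ 4 - 1)%N.
Hypotheses (card_L : #|L| = (q ^ 4)%N) (q_ge3 : (3 <= q)%N).

Let q_gt0 : (0 < q)%N. Proof. exact: ltnW (ltnW q_ge3). Qed.

Lemma card_L_pred : #|L|.-1 = M.
Proof. by rewrite card_L subn1. Qed.

Lemma frob_expr k x : iter k fr x = x ^+ (q ^ k).
Proof. by elim: k => [|k IH]; rewrite ?expr1 //= IH /frob -exprM expnSr. Qed.

Lemma frob2E x : fr (fr x) = x ^+ (q ^ 2).
Proof. exact: frob_expr 2 x. Qed.

Lemma frob4 x : fr (fr (fr (fr x))) = x.
Proof. by have := frob_expr 4 x; rewrite /= -card_L expf_card. Qed.

Lemma exists_frob2_fixed : exists th, fr (fr th) = th /\ fr th != th.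
Proof.
set e := ((q ^ 2 + 1) * (q - 1))%N.
have e_gt0 : (0 < e)%N by rewrite /e; nia.
pose P : {poly L} := 'X * ('X^e - 1).
have size_P : size P = e.+2.
  by rewrite /P mulrC size_mulX ?size_XnsubC // -size_poly_eq0 size_XnsubC.
have [y] : exists y, ~~ root P y.
  by apply: finField_nonroot; rewrite -?size_poly_eq0 size_P // card_L /e; nia.
rewrite /root /P !hornerE mulf_eq0 negb_or subr_eq0 => /andP[y_nz ye_n1].
(* y^(q^2+1) lies in F_(q^2); it is outside F_q iff y^e != 1. *)
exists (y ^+ (q ^ 2 + 1)); split.
  by rewrite frob2E -exprM mulnDl mul1n -expnD exprD -card_L expf_card -exprS addn1.
apply: contra ye_n1 => /eqP th_fix; apply/eqP; rewrite /e exprM.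
have th_nz : y ^+ (q ^ 2 + 1) != 0 by rewrite expf_neq0.
apply: (mulIf th_nz); rewrite mul1r -exprSr subn1 prednK; last by lia.
exact: th_fix.
Qed.

Definition alt_trace y := y - fr y + fr (fr y) - fr (fr (fr y)).

Lemma alt_trace_sum n (t : 'I_n -> L) : alt_trace (\sum_i t i) = \sum_i alt_trace (t i).
Proof. by rewrite /alt_trace !rmorph_sum -!sumrB -big_split -sumrB. Qed.

Lemma alt_trace_nonzero B : B != 0 -> exists c, alt_trace (c * B) != 0.
Proof.
move=> B_nz; pose P : {poly L} := 'X - 'X^q + 'X^(q ^ 2) - 'X^(q ^ 3).
have q_gt1 : (1 < q)%N by apply: leq_trans q_ge3.
have q_lt2 : (q < q ^ 2)%N by rewrite -{1}(expn1 q) ltn_exp2l.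
have q2_lt3 : (q ^ 2 < q ^ 3)%N by rewrite ltn_exp2l.
have q_lt3 := ltn_trans q_lt2 q2_lt3.
have P_eval y : P.[y] = alt_trace y.
  have fr3 : fr (fr (fr y)) = y ^+ (q ^ 3) by exact: frob_expr 3 y.
  by rewrite /P !hornerE /alt_trace fr3 frob2E.
have P_nz : P != 0.
  apply: contraTneq isT => P0; have := congr1 (fun p : {poly L} => p`_(q ^ 3)) P0.
  rewrite /P !coefB !coefD coefN !coefXn coefX eqxx !gtn_eqF ?(ltn_trans q_gt1) //=.
  by rewrite coef0 !(add0r, addr0, oppr0, sub0r) => /eqP; rewrite oppr_eq0 oner_eq0.
have [y] : exists y, ~~ root P y.
  have sizeX k : (k <= q ^ 3)%N -> (size ('X^k : {poly L}) <= (q ^ 3).+1)%N.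
    by rewrite size_polyXn.
  apply: finField_nonroot P_nz (leq_trans (_ : _ <= (q ^ 3).+1)%N _); last first.
    by rewrite card_L (ltn_exp2l 3 4 q_gt1).
  rewrite /P; apply: leq_trans (size_polyD _ _) _.
  rewrite size_polyN geq_max sizeX // andbT; apply: leq_trans (size_polyD _ _) _.
  rewrite geq_max sizeX ?(ltnW q2_lt3) // andbT; apply: leq_trans (size_polyD _ _) _.
  by rewrite geq_max size_polyN size_polyX sizeX ?(ltnW q_lt3) // andbT ltnS expn_gt0 q_gt0.
by rewrite /root P_eval -(divfK B_nz y); exists (y / B).
Qed.

Lemma exists_enum_nonzero : exists al : 'I_M -> L, injective al /\ forall i, al i != 0.
Proof.
have card_nz : M = #|[set~ (0 : L)]| by rewrite cardsC1 card_L_pred.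
exists (fun i => enum_val (cast_ord card_nz i)); split.
  by move=> i j /enum_val_inj /cast_ord_inj.
by move=> i; have := enum_valP (cast_ord card_nz i); rewrite !inE.
Qed.

Section Code.
Variables (th : L) (al : 'I_M -> L) (a : nat).
Hypotheses (th_fix2 : fr (fr th) = th) (th_nfix : fr th != th).
Hypotheses (al_inj : injective al) (al_nz : forall i, al i != 0).
Hypotheses (a_ge2 : (2 <= a)%N) (a_le : (a <= q ^ 2 - 1)%N).

Lemma sum_enum_nonzero (G : L -> L) : \sum_i G (al i) = \sum_(x | x != 0) G x.
Proof.
have al_onto : al @: setT = [set~ 0].
  apply/eqP; rewrite eqEcard cardsC1 card_L_pred card_imset // cardsT card_ord.
  by rewrite leqnn andbT; apply/subsetP => _ /imsetP[i _ ->]; rewrite !inE.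
have -> : \sum_i G (al i) = \sum_(i in [set: 'I_M]) G (al i).
  by apply: eq_bigl => i; rewrite inE.
rewrite -(big_imset G (in2W al_inj)) /= al_onto.
by apply: eq_bigl => x; rewrite !inE.
Qed.

Definition psum e := \sum_i al i ^+ e.

Lemma psumE e : psum e = if (M %| e)%N then -1 else 0.
Proof. by rewrite /psum (sum_enum_nonzero (fun x => x ^+ e)) sum_nonzero_expr card_L_pred. Qed.

(* A message is (b, (d, c)); c j is the coefficient of x^(j+1). *)
Local Notation msg := ((F * F) * ((F * F) * {ffun 'I_(a - 1) -> L}))%type.
Local Notation emb := (embed2 f th).

Definition enc (w : msg) (x : L) : L :=
  emb w.1 + emb w.2.1 * x ^+ (q ^ 2 + 1) +
  \sum_(j < a - 1) (w.2.2 j * x ^+ j.+1 + fr (fr (w.2.2 j * x ^+ j.+1))).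

Definition ev (s : seq (L * nat)) (x : L) := \sum_(m <- s) m.1 * x ^+ m.2.

Definition frob_monos (s : seq (L * nat)) := [seq (fr m.1, (m.2 * q)%N) | m <- s].

Definition monos_tail (w : msg) : seq (L * nat) :=
  (emb w.2.1, (q ^ 2 + 1)%N) ::
  [seq (w.2.2 j, j.+1) | j <- enum 'I_(a - 1)] ++
  [seq (fr (fr (w.2.2 j)), (j.+1 * q ^ 2)%N) | j <- enum 'I_(a - 1)].

Definition monos (w : msg) := (emb w.1, 0%N) :: monos_tail w.

Lemma frob_ev s x : fr (ev s x) = ev (frob_monos s) x.
Proof.
rewrite /ev /frob_monos big_map rmorph_sum; apply: eq_bigr => m _ /=.
by rewrite rmorphM /= {2}/frob -exprM.
Qed.

Lemma enc_ev w x : enc w x = ev (monos w) x.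
Proof.
rewrite /ev /monos /monos_tail !big_cons big_cat !big_map /= expr0 mulr1.
rewrite /enc -big_split /= addrA; congr (_ + _); apply: eq_bigr => j _.
by rewrite !rmorphM /= [fr (fr (x ^+ _))]frob2E -exprM.
Qed.

Lemma monos_tail_exponent w m : m \in monos_tail w -> code_exponent q a m.2.
Proof.
rewrite inE mem_cat => /orP[/eqP -> | /orP[] /mapP[j _ ->]]; first by left.
  by right; exists j.+1; [have := ltn_ord j; lia | left].
by right; exists j.+1; [have := ltn_ord j; lia | right].
Qed.

Lemma frob2_enc w x : fr (fr (enc w x)) = enc w x.
Proof.
have [e1_fix e2_fix] := (frob2_embed2 th_fix2 w.1, frob2_embed2 th_fix2 w.2.1).
move: e1_fix e2_fix; rewrite /enc; move: (emb _) (emb _) => e1 e2 e1_fix e2_fix.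
rewrite !rmorphD !rmorph_sum /= e1_fix; congr (_ + _ + _).
  rewrite !rmorphM /= e2_fix [fr (fr _)]frob2E -exprM.
  by rewrite mulnDl mul1n -expnD exprD -card_L expf_card -exprS addn1.
by apply: eq_bigr => j _; rewrite !rmorphD addrC; congr (_ + _); apply: frob4.
Qed.

Definition word (w : msg) : pvec F M := of_ecoord f th (fun i => enc w (al i)).

Definition stabilizer : {set pvec F M} := [set word w | w in [set: msg]].

Lemma ecoord_word w i : ecoord f th (word w) i = enc w (al i).
Proof. exact/ecoord_of/frob2_enc. Qed.

Lemma sum_ev_mul s s' : \sum_i ev s (al i) * ev s' (al i) =
  \sum_(m <- s) \sum_(m' <- s') m.1 * m'.1 * psum (m.2 + m'.2).
Proof.
rewrite /psum (eq_bigr (fun i => \sum_(m <- s) \sum_(m' <- s')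
   m.1 * m'.1 * al i ^+ (m.2 + m'.2))) => [|i _].
  rewrite exchange_big; apply: eq_bigr => m _.
  by rewrite exchange_big; apply: eq_bigr => m' _; rewrite mulr_sumr.
rewrite /ev mulr_suml; apply: eq_bigr => m _; rewrite mulr_sumr.
by apply: eq_bigr => m' _; rewrite exprD; ring.
Qed.

Lemma psum_exponent_pair A B :
  (A = 0 \/ code_exponent q a A)%N -> (B = 0 \/ code_exponent q a B)%N ->
  ~ (A = 0 /\ B = 0)%N -> psum (A + B * q) = 0.
Proof.
by move=> hA hB nAB; rewrite psumE (negbTE (code_exponent_pair_ndvd q_ge3 a_le hA hB nAB)).
Qed.

Lemma frob_monos_cons m s : frob_monos (m :: s) = (fr m.1, (m.2 * q)%N) :: frob_monos s.
Proof. by []. Qed.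

(* Only the pairing of the two constant terms survives the power sums. *)
Lemma sum_enc_frob w w' :
  \sum_i enc w (al i) * fr (enc w' (al i)) = - (emb w.1 * fr (emb w'.1)).
Proof.
have tailP (w0 : msg) m : m \in monos_tail w0 -> code_exponent q a m.2 /\ m.2 <> 0%N.
  by move=> /monos_tail_exponent e; split => //; have := code_exponent_gt0 q_gt0 e; lia.
have ftailP (w0 : msg) m' : m' \in frob_monos (monos_tail w0) ->
    exists2 m, m \in monos_tail w0 & m'.2 = (m.2 * q)%N.
  by case/mapP => m m_in ->; exists m.
rewrite (eq_bigr (fun i => ev (monos w) (al i) * ev (frob_monos (monos w')) (al i)));
  last by move=> i _; rewrite !enc_ev frob_ev.
rewrite sum_ev_mul /monos frob_monos_cons big_cons big_cons /= -/(monos_tail w').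
rewrite mul0n psumE dvdn0.
rewrite mulrN1 big1_seq => [|m' /andP[_ /ftailP[m /tailP[e n0] ->]]]; last first.
  by rewrite psum_exponent_pair ?mulr0 //; [left | right | case].
rewrite addr0 big1_seq ?addr0 // => m /andP[_ /tailP[e n0]].
rewrite big_cons big1_seq => [|m' /andP[_ /ftailP[m'' /tailP[e' _] ->]]]; last first.
  by rewrite psum_exponent_pair ?mulr0 //; [right | right | case].
by rewrite addr0 /= -[X in psum (_ + X)](mul0n q) psum_exponent_pair ?mulr0 //;
  [right | left | case].
Qed.

Lemma symp_word w w' : symp (word w) (word w') = w.1.2 * w'.1.1 - w.1.1 * w'.1.2.
Proof.
have dth_nz : fr th - th != 0 by rewrite subr_eq0.
apply: (fmorph_inj f); apply: (mulIf dth_nz); rewrite symp_ecoord.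
rewrite (eq_bigr (fun i => enc w (al i) * fr (enc w' (al i)) -
  enc w' (al i) * fr (enc w (al i)))) => [|i _]; last first.
  by rewrite !ecoord_word (mulrC (fr _)).
rewrite sumrB !sum_enc_frob /embed2 !rmorphD !rmorphM /= !frob_rmorph; ring.
Qed.

Definition enc_coef (w : msg) m := \sum_(p <- monos w | p.2 == m) p.1.

Lemma monos_exponent_lt w p : p \in monos w -> (p.2 < M)%N.
Proof.
rewrite inE => /orP[/eqP -> /= | /monos_tail_exponent]; last exact: code_exponent_lt.
by rewrite subn_gt0 -{1}(expn0 q) ltn_exp2l; lia.
Qed.

(* Multiplying by al_i^(M - m) and summing isolates the coefficient of x^m. *)
Lemma enc_coefE w m : (m < M)%N ->
  enc_coef w m = - \sum_i enc w (al i) * al i ^+ (M - m).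
Proof.
move=> m_lt; rewrite -sumrN (eq_bigr (fun i => \sum_(p <- monos w)
  - (p.1 * al i ^+ (p.2 + (M - m))))) => [|i _]; last first.
  by rewrite enc_ev /ev mulr_suml -sumrN; apply: eq_bigr => p _; rewrite exprD mulrA.
rewrite exchange_big /enc_coef big_mkcond /= !big_seq; apply: eq_bigr => p p_in.
rewrite sumrN -mulr_sumr -/(psum _) psumE dvdn_add_subn ?(monos_exponent_lt p_in) //.
by case: eqP => _; rewrite ?mulrN1 ?opprK ?mulr0 ?oppr0.
Qed.

Lemma enc_coef0 w : enc_coef w 0%N = emb w.1.
Proof.
rewrite /enc_coef big_cons /= big1_seq ?addr0 // => p /andP[/eqP p0 /monos_tail_exponent].
by move/(code_exponent_gt0 q_gt0); rewrite p0.
Qed.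

Lemma enc_coef_sqS w : enc_coef w (q ^ 2 + 1)%N = emb w.2.1.
Proof.
have Q9 : (9 <= q ^ 2)%N by rewrite expnS expn1; nia.
rewrite /enc_coef /monos /monos_tail !big_cons /= eqxx addn1 /= big_cat !big_map.
rewrite !big1_seq => [|j /andP[/eqP e _]|j /andP[/eqP e _]]; first by rewrite /= !addr0.
  move: e Q9 => /=; move: (q ^ 2)%N => Q.
  by case: (nat_of_ord j) => [|k]; nia.
by move: e (ltn_ord j) a_le Q9 => /=; move: (q ^ 2)%N => Q; lia.
Qed.

Lemma enc_coef_small w (j : 'I_(a - 1)) : enc_coef w j.+1 = w.2.2 j.
Proof.
have Q9 : (9 <= q ^ 2)%N by rewrite expnS expn1; nia.
have j_lt := ltn_ord j.
have -> : enc_coef w j.+1 = \sum_(k <- enum 'I_(a - 1) | k.+1 == j.+1) w.2.2 k.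
  rewrite /enc_coef /monos /monos_tail !big_cons /= big_cat !big_map /=.
  have -> : (q ^ 2 + 1 == j.+1)%N = false.
    by apply/negbTE; move: j_lt a_le Q9; move: (q ^ 2)%N => Q; lia.
  rewrite [X in _ + X]big1_seq /= ?addr0 // => k /andP[/eqP e _].
  by move: e (ltn_ord k) a_le Q9 => /=; move: (q ^ 2)%N => Q; nia.
by rewrite big_enum_cond /= (big_pred1 j) // => k /=; rewrite eqSS.
Qed.

Lemma enc_inj w w' : (forall i, enc w (al i) = enc w' (al i)) -> w = w'.
Proof.
move=> e; have same_coef m : (m < M)%N -> enc_coef w m = enc_coef w' m.
  by move=> m_lt; rewrite !enc_coefE //; congr (- _); apply: eq_bigr => i _; rewrite e.
have M_gt0 : (0 < M)%N by rewrite subn_gt0 -{1}(expn0 q) ltn_exp2l; lia.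
have := same_coef 0%N M_gt0; rewrite !enc_coef0 => /(embed2_inj th_nfix) e1.
have := same_coef _ (code_exponent_lt q_ge3 a_le (or_introl erefl)).
rewrite !enc_coef_sqS => /(embed2_inj th_nfix) e2.
have e3 j : w.2.2 j = w'.2.2 j.
  rewrite -!enc_coef_small; apply: same_coef; apply: (code_exponent_lt q_ge3 a_le).
  by right; exists j.+1; [have := ltn_ord j; lia | left].
case: w w' e1 e2 e3 {e same_coef} => [b [d c]] [b' [d' c']] /= -> -> e3.
by congr (_, (_, _)); apply/ffunP.
Qed.

Lemma word_inj : injective word.
Proof. by move=> w w' e; apply: enc_inj => i; rewrite -!ecoord_word e. Qed.

Lemma card_stabilizer : #|stabilizer| = #|{: msg}|.
Proof. by rewrite card_imset ?cardsT //; apply: word_inj. Qed.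

Lemma mem_stabilizerP v : reflect (exists w, forall i, ecoord f th v i = enc w (al i)) (v \in stabilizer).
Proof.
apply: (iffP imsetP) => [[w _ ->] | [w e]]; first by exists w => i; rewrite ecoord_word.
by exists w => //; apply: (ecoord_inj th_nfix) => i; rewrite e ecoord_word.
Qed.

Definition msg_scale c (w : msg) : msg :=
  ((c * w.1.1, c * w.1.2), ((c * w.2.1.1, c * w.2.1.2), [ffun j => f c * w.2.2 j])).

Lemma enc_add w w' x : enc (w + w') x = enc w x + enc w' x.
Proof.
rewrite /enc !embed2D (eq_bigr (fun j => (w.2.2 j * x ^+ j.+1 + fr (fr (w.2.2 j * x ^+ j.+1))) +
  (w'.2.2 j * x ^+ j.+1 + fr (fr (w'.2.2 j * x ^+ j.+1))))) => [|j _].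
  by rewrite big_split /=; ring.
by rewrite ffunE mulrDl !rmorphD /=; ring.
Qed.

Lemma enc_scale c w x : enc (msg_scale c w) x = f c * enc w x.
Proof.
rewrite /enc !embed2Z (eq_bigr (fun j => f c * (w.2.2 j * x ^+ j.+1 +
  fr (fr (w.2.2 j * x ^+ j.+1))))) => [|j _].
  by rewrite -mulr_sumr; ring.
by rewrite ffunE !rmorphM /= !frob_rmorph; ring.
Qed.

Lemma stabilizer_subspace : is_subspace stabilizer.
Proof.
have S_scale c v : v \in stabilizer -> c *: v \in stabilizer.
  case/mem_stabilizerP => w e; apply/mem_stabilizerP; exists (msg_scale c w) => i.
  by rewrite ecoordZ e enc_scale.
split; last exact: S_scale.
  by rewrite -(scale0r (word 0)) S_scale ?imset_f.
move=> u v /mem_stabilizerP[w eu] /mem_stabilizerP[w' ev]; apply/mem_stabilizerP; exists (w + w') => i.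
by rewrite ecoordD eu ev enc_add.
Qed.

Lemma enc_pair b x : enc (b, 0) x = emb b.
Proof.
rewrite /enc big1 => [|j _]; last by rewrite ffunE mul0r rmorph0 rmorph0 addr0.
by rewrite /= embed20 mul0r !addr0.
Qed.

Lemma enc_single j c x :
  enc (0, (0, [ffun k => if k == j then c else 0])) x =
  c * x ^+ j.+1 + fr (fr (c * x ^+ j.+1)).
Proof.
rewrite /enc (bigD1 j) //= big1 => [|k k_neq_j]; last first.
  by rewrite ffunE (negbTE k_neq_j) mul0r !rmorph0 addr0.
by rewrite ffunE eqxx /= embed20 mul0r !add0r addr0.
Qed.

Lemma sdual_stabilizer_symp v : v \in sdual stabilizer -> forall w, symp (word w) v = 0.
Proof. by rewrite inE => /forall_inP v_orth w; apply/eqP/v_orth/imset_f. Qed.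

Lemma hull_stabilizer : stabilizer :&: sdual stabilizer = [set word (0, w2) | w2 in [set: (F * F) * {ffun 'I_(a - 1) -> L}]].
Proof.
apply/setP => v; apply/idP/idP.
  rewrite inE => /andP[/imsetP[[b w2] _ ->] v_orth].
  have := sdual_stabilizer_symp v_orth ((1, 0), 0); have := sdual_stabilizer_symp v_orth ((0, 1), 0).
  rewrite !symp_word /= !mul0r !mul1r subr0 sub0r => b1 /eqP; rewrite oppr_eq0 => /eqP b2.
  by apply/imsetP; exists w2; [rewrite in_setT | case: b b1 b2 {v_orth} => x y /= -> ->].
case/imsetP => w2 _ ->; rewrite in_setI imset_f ?in_setT //= inE; apply/forall_inP => _ /imsetP[w _ ->].
by rewrite symp_word /= !mulr0 subrr.
Qed.

Lemma card_hull : #|stabilizer :&: sdual stabilizer| = #|{: (F * F) * {ffun 'I_(a - 1) -> L}}|.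
Proof. by rewrite hull_stabilizer card_imset ?cardsT // => w2 w2' /word_inj []. Qed.

Section DualVector.
Variable v : pvec F M.
Hypothesis v_orth : v \in sdual stabilizer.
Local Notation Z := (ecoord f th v).

Lemma sdual_enc_orth w : \sum_i (enc w (al i) * fr (Z i) - fr (enc w (al i)) * Z i) = 0.
Proof.
have := symp_ecoord f th (word w) v; rewrite sdual_stabilizer_symp // rmorph0 mul0r => e.
by rewrite [RHS]e; apply: eq_bigr => i _; rewrite ecoord_word.
Qed.

Lemma sdual_sum_frob : \sum_i fr (Z i) = 0.
Proof.
have enc10 x : enc ((1, 0), 0) x = 1.
  by rewrite enc_pair /embed2 /= rmorph1 rmorph0 mulr0 addr0.
have enc01 x : enc ((0, 1), 0) x = th.
  by rewrite enc_pair /embed2 /= rmorph1 rmorph0 mulr1 add0r.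
have := sdual_enc_orth ((0, 1), 0); have := sdual_enc_orth ((1, 0), 0).
rewrite (eq_bigr (fun i => fr (Z i) - Z i)) => [|i _]; last first.
  by rewrite enc10 rmorph1 !mul1r.
rewrite sumrB => /eqP; rewrite subr_eq0 => /eqP sumZ.
rewrite (eq_bigr (fun i => th * fr (Z i) - fr th * Z i)) => [|i _]; last first.
  by rewrite enc01.
rewrite sumrB -!mulr_sumr -sumZ -mulrBl => /eqP.
by rewrite mulf_eq0 subr_eq0 eq_sym (negbTE th_nfix) => /eqP.
Qed.

(* Since Z^(q^2) = Z, the pairing of v with the word of c x^m is the alternating
   trace of c * \sum_i al_i^m Z_i^q. *)
Lemma sdual_power_sum_frob m : (m < a)%N -> \sum_i al i ^+ m * fr (Z i) = 0.
Proof.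
case: m => [_ | j j_lt].
  by rewrite -[RHS]sdual_sum_frob; apply: eq_bigr => i _; rewrite mul1r.
have [//|/alt_trace_nonzero[c]] := eqVneq (\sum_i al i ^+ j.+1 * fr (Z i)) 0.
suff -> : alt_trace (c * \sum_i al i ^+ j.+1 * fr (Z i)) = 0 by rewrite eqxx.
have j_lt' : (j < a - 1)%N by lia.
have := sdual_enc_orth (0, (0, [ffun k => if k == Ordinal j_lt' then c else 0])).
rewrite mulr_sumr alt_trace_sum => e; rewrite -[in RHS]e; apply: eq_bigr => i _.
rewrite enc_single /alt_trace; have := frob2_ecoord th_fix2 v i.
by move: (Z i) => z z_fix2; rewrite !rmorphD !rmorphM /= !frob4 ?z_fix2; ring.
Qed.

Lemma sdual_weight_gt : v != 0 -> (a < swt v)%N.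
Proof.
apply: contraNT; rewrite -leqNgt (swt_ecoord th_nfix) => wt_le.
have supp_le : (#|[set i | fr (Z i) != 0%R]| <= a)%N.
  by apply: leq_trans wt_le; apply/subset_leq_card/subsetP => i; rewrite !inE fmorph_eq0.
have frZ0 := sparse_power_sums_eq0 al_inj supp_le sdual_power_sum_frob.
apply/eqP/(ecoord_inj th_nfix) => i; rewrite ecoord0.
by apply/eqP; rewrite -(fmorph_eq0 fr); apply/eqP/frZ0.
Qed.

End DualVector.

Lemma card_msg : #|{: msg}| = (q ^ (4 * a))%N.
Proof.
rewrite !card_prod card_ffun card_ord card_L !mulnn -expnM -!expnD.
by have -> : (2 + (2 + 4 * (a - 1)) = 4 * a)%N by lia.
Qed.

Lemma quenta_code_stabilizer : quenta_code F M (M - 4 * (a - 1) - 3) (a + 1) 1.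
Proof.
have [S0 _ _] := stabilizer_subspace.
exists stabilizer; split.
- exact: stabilizer_subspace.
- by rewrite card_stabilizer card_msg -expnD quenta_exponent_eq ?a_ge2.
- rewrite card_stabilizer card_hull card_msg !card_prod card_ffun card_ord card_L mulnn.
  by rewrite -expnM -!expnD; have -> : (4 * a = 2 + 4 * (a - 1) + 2 * 1)%N by lia.
- move=> v; rewrite inE => /andP[v_notin v_orth]; rewrite addn1.
  by apply: sdual_weight_gt => //; apply: contraNneq v_notin => ->.
Qed.

End Code.
End QuarticExtension.

Local Close Scope ring_scope.

Theorem mainTheorem10 (F : finFieldType) (q : nat) (hq : #|F| = q) (hq3 : 3 <= q)
  (a : nat) (ha : 2 <= a <= q ^ 2 - 1) :
  quenta_code F (q ^ 4 - 1) (q ^ 4 - 1 - 4 * (a - 1) - 3) (a + 1) 1.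
Proof.
subst q; have /andP[a_ge2 a_le] := ha.
have [L [f card_L]] := finField_ext F (isT : (0 < 4)%N).
have [th [th_fix2 th_nfix]] := exists_frob2_fixed f card_L hq3.
have [al [al_inj al_nz]] := exists_enum_nonzero card_L.
exact: (quenta_code_stabilizer card_L hq3 th_fix2 th_nfix al_inj al_nz a_ge2 a_le).
Qed.
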